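(* Let $G=(V,E)$ be a digraph and let $p(x,y,z)$ be a polymorphism of $G^{\bot\top}$ such that $p(x,y,y)=x$ for all vertices $x,y$. Then, with neighbourhoods taken in $G^{\bot\top}$: (1) $a^+\subseteq p(a,b,c)^+$ for all $a,b,c\in V\cup\{\bot\}$; (2) $a^-\subseteq p(a,b,c)^-$ for all $a,b,c\in V\cup\{\top\}$; (3) if $G$ is nondismantlable, then $p(a,b,c)=a$ for all $a,b,c\in V$.
   Context: Digraphs are finite and loopless. $G^\bot$ is the digraph on $V\cup\{\bot\}$ with edges $E\cup\{(\bot,v):v\in V\}$; $G^{\bot\top}$ is the digraph on $V\cup\{\bot,\top\}$ obtained from $G^\bot$ by adding $\top$ and all edges $(v,\top)$ for $v\in V\cup\{\bot\}$. For a vertex $x$ of a digraph, $x^+$ is the set of out-neighbours and $x^-$ the set of in-neighbours. $G$ is nondismantlable if for all $v,w\in V$, $v^+\subseteq w^+$ and $v^-\subseteq w^-$ (in $G$) imply $v=w$. A ternary polymorphism of a digraph $(W,F)$ is a map $f:W^3\to W$ with $(f(a_1,a_2,a_3),f(b_1,b_2,b_3))\in F$ whenever all $(a_i,b_i)\in F$. *)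

From mathcomp Require Import all_boot.
Set Implicit Arguments. Unset Strict Implicit. Unset Printing Implicit Defensive.

(* A finite loopless digraph G = (V, E) is given by V : finType and
   E : rel V with E irreflexive. *)
Definition loopless (V : Type) (E : rel V) : Prop := forall v, ~~ E v v.

(* Vertex set V ∪ {⊥, ⊤} of G^{⊥⊤}. *)
Inductive btv (V : Type) : Type := Bot | Top | Vx of V.
Arguments Bot {V}.
Arguments Top {V}.
Arguments Vx {V} _.

Definition ebt (V : Type) (E : rel V) (a b : btv V) : bool :=
  match a, b with
  | Vx u, Vx v => E u v
  | Bot, Vx _ => true
  | Bot, Top => true
  | Vx _, Top => true
  | _, _ => false
  end.

Definition outN (W : Type) (F : rel W) (x : W) : pred W := fun y => F x y.
Definition inN (W : Type) (F : rel W) (x : W) : pred W := fun y => F y x.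

Definition nondismantlable (V : Type) (E : rel V) : Prop :=
  forall v w : V, {subset outN E v <= outN E w} ->
                  {subset inN E v <= inN E w} -> v = w.

Definition polymorphism3 (W : Type) (F : rel W) (f : W -> W -> W -> W) : Prop :=
  forall a1 a2 a3 b1 b2 b3, F a1 b1 -> F a2 b2 -> F a3 b3 ->
    F (f a1 a2 a3) (f b1 b2 b3).

From mathcomp Require Import all_boot.

Set Implicit Arguments.
Unset Strict Implicit.
Unset Printing Implicit Defensive.

(* For d in a^+, the polymorphism applied to the edges a -> d, b -> T, c -> T
   gives p(a,b,c) -> p(d,T,T) = d, where T is the top vertex ⊤; dually with ⊥.
   In (3), p(a,b,c) is adjacent to ⊤ and from ⊥, hence a vertex w of G, and
   a^± ⊆ w^± forces w = a by nondismantlability. *)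

Section MaltsevNeighbourhoods.

Variables (W : Type) (F : rel W) (f : W -> W -> W -> W).
Hypothesis f_poly : polymorphism3 F f.
Hypothesis f_id : forall x y, f x y y = x.

Lemma polymorphism_outN_sub a b c t : F b t -> F c t ->
  {subset outN F a <= outN F (f a b c)}.
Proof.
move=> Fbt Fct d Fad; rewrite /outN /in_mem /= -(f_id d t).
exact: f_poly.
Qed.

Lemma polymorphism_inN_sub a b c s : F s b -> F s c ->
  {subset inN F a <= inN F (f a b c)}.
Proof.
move=> Fsb Fsc d Fda; rewrite /inN /in_mem /= -(f_id d s).
exact: f_poly.
Qed.

End MaltsevNeighbourhoods.

Section BotTop.

Variables (V : Type) (E : rel V).

Lemma ebt_top (a : btv V) : a <> Top -> ebt E a Top.
Proof. by case: a. Qed.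

Lemma ebt_bot (a : btv V) : a <> Bot -> ebt E Bot a.
Proof. by case: a. Qed.

Lemma ebt_between_bot_top (x : btv V) :
  ebt E Bot x -> ebt E x Top -> exists w, x = Vx w.
Proof. by case: x => // w; exists w. Qed.

Lemma outN_ebt_Vx_sub (u w : V) :
  {subset outN (ebt E) (Vx u) <= outN (ebt E) (Vx w)} ->
  {subset outN E u <= outN E w}.
Proof. by move=> sub d; apply: (sub (Vx d)). Qed.

Lemma inN_ebt_Vx_sub (u w : V) :
  {subset inN (ebt E) (Vx u) <= inN (ebt E) (Vx w)} ->
  {subset inN E u <= inN E w}.
Proof. by move=> sub d; apply: (sub (Vx d)). Qed.

End BotTop.

Theorem lemma5p2 (V : finType) (E : rel V) (HE : loopless E)
  (p : btv V -> btv V -> btv V -> btv V)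
  (Hp : polymorphism3 (ebt E) p)
  (Hm : forall x y : btv V, p x y y = x) :
  (forall a b c : btv V, a <> Top -> b <> Top -> c <> Top ->
     {subset outN (ebt E) a <= outN (ebt E) (p a b c)}) /\
  (forall a b c : btv V, a <> Bot -> b <> Bot -> c <> Bot ->
     {subset inN (ebt E) a <= inN (ebt E) (p a b c)}) /\
  (nondismantlable E ->
     forall a b c : V, p (Vx a) (Vx b) (Vx c) = Vx a).
Proof.
have out_sub (a b c : btv V) (_ : a <> Top) (hb : b <> Top) (hc : c <> Top) :=
  polymorphism_outN_sub Hp Hm (a := a) (ebt_top E hb) (ebt_top E hc).
have in_sub (a b c : btv V) (_ : a <> Bot) (hb : b <> Bot) (hc : c <> Bot) :=
  polymorphism_inN_sub Hp Hm (a := a) (ebt_bot E hb) (ebt_bot E hc).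
split; first exact: out_sub.
split; first exact: in_sub.
move=> nondism a b c.
have out_a := out_sub (Vx a) (Vx b) (Vx c) ltac:(done) ltac:(done) ltac:(done).
have in_a := in_sub (Vx a) (Vx b) (Vx c) ltac:(done) ltac:(done) ltac:(done).
have [w pw] : exists w, p (Vx a) (Vx b) (Vx c) = Vx w.
  by apply: ebt_between_bot_top; [apply: (in_a Bot) | apply: (out_a Top)].
rewrite pw in out_a in_a *; congr Vx; symmetry.
by apply: nondism; [apply: outN_ebt_Vx_sub out_a | apply: inN_ebt_Vx_sub in_a].
Qed.
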